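(* For every $Q\in\mathcal{P}$ and every $v>0$, $$D^*(v,Q)=\inf\{D(P\Vert Q): P\in\mathcal{P},\ V(P,Q)=v\}.$$
   Context: Let $(\Omega,\mathcal{F},\mu)$ be a finite or $\sigma$-finite measure space, and let $\mathcal{P}$ be the set of probability measures on $(\Omega,\mathcal{F})$ absolutely continuous with respect to $\mu$. For $P,Q\in\mathcal{P}$ the lower-case letters $p,q$ denote their densities with respect to $\mu$. The Kullback–Leibler divergence is $D(P\Vert Q)=\int\ln\frac{dP}{dQ}\,dP$ if $P\ll Q$, and $+\infty$ otherwise. The total variation distance is $V(P,Q)=\int_\Omega|p-q|\,d\mu$. For $v>0$ define $D^*(v,Q)=\inf\{D(P\Vert Q):P\in\mathcal{P},\ V(P,Q)\ge v\}$. All infima over empty sets equal $+\infty$. *)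

From HB Require Import structures.
From mathcomp Require Import all_boot all_order all_algebra.
From mathcomp Require Import all_classical all_reals all_analysis.
Set Implicit Arguments. Unset Strict Implicit. Unset Printing Implicit Defensive.
Import Order.TTheory GRing.Theory Num.Theory.
Local Open Scope classical_set_scope.
Local Open Scope ring_scope.
Local Open Scope ereal_scope.

Section Defs.
Context {d : measure_display} {T : measurableType d} {R : realType}.
Variable mu : {measure set T -> \bar R}.

(* An element of the class P of probability measures absolutely continuous
   w.r.t. mu, represented (as in the paper) by its density p w.r.t. mu:
   P(A) = \int_A p dmu. *)
Definition is_density (p : T -> R) : Prop :=
  [/\ measurable_fun setT p, (forall x, (0 <= p x)%R)
    & \int[mu]_x (p x)%:E = 1].

Definition dens_meas (p : T -> R) (A : set T) : \bar R :=
  \int[mu]_(x in A) (p x)%:E.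

Definition dens_abs_cont (p q : T -> R) : Prop :=
  forall A, measurable A -> dens_meas q A = 0 -> dens_meas p A = 0.

(* Kullback-Leibler divergence D(P||Q) = \int ln (dP/dQ) dP if P << Q,
   +oo otherwise; here dP/dQ = p/q and dP = p dmu. *)
Definition KL (p q : T -> R) : \bar R :=
  if `[< dens_abs_cont p q >] then
    \int[mu]_x ((p x * ln (p x / q x))%R)%:E
  else +oo.

Definition TV (p q : T -> R) : \bar R := \int[mu]_x (`|p x - q x|%R)%:E.

(* D^*(v,Q) = inf { D(P||Q) : P in P, V(P,Q) >= v } (inf of empty set = +oo). *)
Definition Dstar (v : R) (q : T -> R) : \bar R :=
  ereal_inf [set KL p q | p in [set p | is_density p /\ v%:E <= TV p q]].

End Defs.

(* Given P with V(P,Q) >= v, the mixture P_t := (1 - t) Q + t P with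
   t := v / V(P,Q) in (0, 1] has V(P_t, Q) = t V(P,Q) = v exactly, since
   p_t - q = t (p - q).  By joint convexity of (p, q) |-> p ln (p / q), i.e.
   convexity of x ln x along the segment from 1 to p / q,
   D(P_t||Q) <= t D(P||Q) <= D(P||Q), the last step by Gibbs' inequality.
   Hence restricting the infimum to V = v does not increase it. *)

From HB Require Import structures.
From mathcomp Require Import all_boot all_order all_algebra.
From mathcomp Require Import all_classical all_reals all_analysis.
From mathcomp Require Import measurable_realfun ring lra.
Set Implicit Arguments.
Unset Strict Implicit.
Unset Printing Implicit Defensive.

Import Order.TTheory GRing.Theory Num.Theory.
Local Open Scope classical_set_scope.
Local Open Scope ring_scope.

Lemma measurable_inv (R : realType) : measurable_fun setT (@GRing.inv R).
Proof.
have -> : @GRing.inv R = fun x => if x == 0 then 0 else x^-1.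
  by apply/funext => x; case: eqP => [->|]; rewrite ?invr0.
apply: measurable_fun_if => //; first exact: measurable_fun_eqr.
apply: (measurable_funS (E := [set x : R | x != 0])).
- by apply: open_measurable; exact: open_neq.
- by move=> x [_ /=] ->.
- apply: open_continuous_measurable_fun; first exact: open_neq.
  by move=> x; rewrite inE => /inv_continuous.
Qed.

Section xlnx.
Variable R : realType.
Implicit Types a b p q t x : R.

Lemma ln_le_subr1 x : 0 < x -> ln x <= x - 1.
Proof.
move=> x0; have := @le_ln1Dx R (x - 1).
by rewrite addrCA subrr addr0; apply; lra.
Qed.

Lemma xlnx_ge_tangent a b : 0 <= a -> 0 < b ->
  b * ln b + (ln b + 1) * (a - b) <= a * ln a.
Proof.
move=> a0 b0; have [->|a_neq0] := eqVneq a 0; first by rewrite mul0r; lra.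
have a_gt0 : 0 < a by rewrite lt0r a_neq0.
have := ln_le_subr1 (divr_gt0 b0 a_gt0); rewrite ln_div ?posrE //.
move=> /(ler_wpM2l (ltW a_gt0)).
by rewrite [in X in _ <= X -> _]mulrBr mulrCA divff ?gt_eqF // mulr1; nra.
Qed.

Lemma xlnx_convex1 x t : 0 <= x -> 0 <= t <= 1 ->
  (1 - t + t * x) * ln (1 - t + t * x) <= t * (x * ln x).
Proof.
move=> x0 /andP[t0 t1]; set y := 1 - t + t * x.
have y0 : 0 <= y by rewrite /y; nra.
have [y_eq0|y_neq0] := eqVneq y 0.
  have -> : x = 0 by move: y_eq0; rewrite /y; nra.
  by rewrite y_eq0 !mul0r mulr0.
have y_gt0 : 0 < y by rewrite lt0r y_neq0.
have at_x := xlnx_ge_tangent x0 y_gt0.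
have := xlnx_ge_tangent ler01 y_gt0; rewrite ln1 mulr0.
move: at_x; rewrite /y; set L := ln _; set M := ln x; clearbody L M; nra.
Qed.

(* Convexity of [x ln x] transported to the perspective [q (p/q) ln (p/q)]. *)
Lemma rel_entropy_mix_le p q t : 0 <= p -> 0 <= q -> 0 <= t <= 1 ->
  ((1 - t) * q + t * p) * ln (((1 - t) * q + t * p) / q) <= t * (p * ln (p / q)).
Proof.
move=> p0 q0 t01; have [->|q_neq0] := eqVneq q 0.
  by rewrite invr0 !mulr0 (ln0 (lexx 0)) !mulr0.
have q_gt0 : 0 < q by rewrite lt0r q_neq0.
have -> : ((1 - t) * q + t * p) / q = 1 - t + t * (p / q) by field.
have -> : (1 - t) * q + t * p = q * (1 - t + t * (p / q)) by field.
have -> : t * (p * ln (p / q)) = q * (t * (p / q * ln (p / q))) by field.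
rewrite -[in leLHS]mulrA ler_wpM2l ?(ltW q_gt0) //.
by apply: xlnx_convex1 => //; exact: divr_ge0.
Qed.

Lemma sub_le_rel_entropy p q : 0 <= p -> 0 < q -> p - q <= p * ln (p / q).
Proof.
move=> p0 q0; have := xlnx_ge_tangent (divr_ge0 p0 (ltW q0)) ltr01.
rewrite ln1 mulr0 !add0r mul1r => /(ler_wpM2l (ltW q0)).
have qpq : q * (p / q) = p by rewrite mulrC divfK ?gt_eqF.
by rewrite mulrBr mulr1 qpq mulrA qpq.
Qed.

(* At [q = 0] both sides are [0] by the conventions [p / 0 = 0], [ln 0 = 0]. *)
Lemma oppr_le_rel_entropy p q : 0 <= p -> 0 <= q -> - q <= p * ln (p / q).
Proof.
move=> p0 q0; have [->|q_neq0] := eqVneq q 0.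
  by rewrite invr0 mulr0 (ln0 (lexx 0)) mulr0 oppr0.
have q_gt0 : 0 < q by rewrite lt0r q_neq0.
have := sub_le_rel_entropy p0 q_gt0; lra.
Qed.

End xlnx.

Local Open Scope ereal_scope.

Section integral_measurable.
Context d (T : measurableType d) (R : realType).
Variable mu : {measure set T -> \bar R}.

Lemma le_integral_measurable (f g : T -> \bar R) :
  measurable_fun setT f -> measurable_fun setT g -> (forall x, f x <= g x) ->
  \int[mu]_x f x <= \int[mu]_x g x.
Proof.
move=> mf mg fg; rewrite (integralE _ _ f) (integralE _ _ g).
have fgT : {in setT, forall x, f x <= g x} by move=> x _; exact: fg.
apply: leeB; apply: ge0_le_integral => //.
- exact: measurable_funepos.
- exact: measurable_funepos.
- by move=> x _; apply: (funepos_le fgT); rewrite in_setT.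
- exact: measurable_funeneg.
- exact: measurable_funeneg.
- by move=> x _; apply: (funeneg_le fgT); rewrite in_setT.
Qed.

Lemma integralZl_fin_funeneg (t : R) (f : T -> \bar R) :
  (0 <= t)%R -> measurable_fun setT f -> \int[mu]_x f^\- x \is a fin_num ->
  \int[mu]_x (t%:E * f x) = t%:E * \int[mu]_x f x.
Proof.
move=> t0 mf fn; rewrite (integralE _ _ (fun x => t%:E * f x)) (integralE _ _ f).
rewrite ge0_funeposM // ge0_funenegM //.
rewrite !ge0_integralZl_EFin //; last 2 first.
- exact: measurable_funeneg.
- exact: measurable_funepos.
rewrite (@muleBr _ t%:E (\int[mu]_x f^\+ x)) //.
by apply: fin_num_adde_defl; rewrite fin_numN.
Qed.

End integral_measurable.

Definition mixture {R : realType} {T : Type} (t : R) (p q : T -> R)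
    (x : T) : R :=
  (1 - t) * q x + t * p x.

Lemma measurable_rel_entropy d (T : measurableType d) (R : realType)
    (p q : T -> R) :
  measurable_fun setT p -> measurable_fun setT q ->
  measurable_fun setT (fun x => p x * ln (p x / q x))%R.
Proof.
move=> mp mq; apply: measurable_funM => //.
apply: measurableT_comp; first exact: measurable_ln.
by apply: measurable_funM => //; apply: measurableT_comp => //; exact: measurable_inv.
Qed.

Section densities.
Context d (T : measurableType d) (R : realType).
Variable mu : {measure set T -> \bar R}.
Variables p q : T -> R.
Hypotheses (hp : is_density mu p) (hq : is_density mu q).

Let mp : measurable_fun setT p. Proof. by case: hp. Qed.
Let mq : measurable_fun setT q. Proof. by case: hq. Qed.
Let p_ge0 x : (0 <= p x)%R. Proof. by case: hp. Qed.
Let q_ge0 x : (0 <= q x)%R. Proof. by case: hq. Qed.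
Let int_p : \int[mu]_x (p x)%:E = 1. Proof. by case: hp. Qed.
Let int_q : \int[mu]_x (q x)%:E = 1. Proof. by case: hq. Qed.

Lemma integral_mixture (A : set T) (t : R) : measurable A -> (0 <= t <= 1)%R ->
  \int[mu]_(x in A) (mixture t p q x)%:E =
  (1 - t)%:E * \int[mu]_(x in A) (q x)%:E + t%:E * \int[mu]_(x in A) (p x)%:E.
Proof.
move=> mA /andP[t0 t1].
have mpA : measurable_fun A (EFin \o p).
  by apply/measurable_EFinP; exact: measurable_funTS.
have mqA : measurable_fun A (EFin \o q).
  by apply/measurable_EFinP; exact: measurable_funTS.
under eq_integral do rewrite EFinD !EFinM.
rewrite ge0_integralD //; last 4 first.
- by move=> x _; rewrite -EFinM lee_fin mulr_ge0 ?subr_ge0.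
- exact: measurable_funeM.
- by move=> x _; rewrite -EFinM lee_fin mulr_ge0.
- exact: measurable_funeM.
rewrite !ge0_integralZl_EFin ?subr_ge0 // => x _; exact: p_ge0 || exact: q_ge0.
Qed.

Lemma is_density_mixture (t : R) :
  (0 <= t <= 1)%R -> is_density mu (mixture t p q).
Proof.
move=> t01; case/andP: (t01) => t0 t1; split.
- by apply: measurable_funD; apply: measurable_funM => //; exact: measurable_cst.
- by move=> x; rewrite addr_ge0 // mulr_ge0 // subr_ge0.
- by rewrite integral_mixture // int_p int_q !mule1 -EFinD subrK.
Qed.

Lemma dens_abs_cont_mixture (t : R) : (0 <= t <= 1)%R ->
  dens_abs_cont mu p q -> dens_abs_cont mu (mixture t p q) q.
Proof.
move=> t01 pq A mA qA0; rewrite /dens_meas integral_mixture //.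
by rewrite -!/(dens_meas mu _ A) qA0 pq // !mule0 adde0.
Qed.

Lemma TV_mixture (t : R) :
  (0 <= t)%R -> TV mu (mixture t p q) q = t%:E * TV mu p q.
Proof.
move=> t0; rewrite /TV -ge0_integralZl_EFin //; last first.
  by apply/measurable_EFinP; apply: measurableT_comp => //; exact: measurable_funB.
apply: eq_integral => x _; rewrite -EFinM.
have -> : (mixture t p q x - q x = t * (p x - q x))%R by rewrite /mixture; ring.
by rewrite normrM ger0_norm.
Qed.

Lemma TV_fin_num : TV mu p q \is a fin_num.
Proof.
have TV_le2 : TV mu p q <= 2%:E.
  rewrite (_ : 2%:E = \int[mu]_x (p x)%:E + \int[mu]_x (q x)%:E); last first.
    by rewrite int_p int_q.
  rewrite /TV -ge0_integralD //; last 4 first.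
  - by move=> x _; rewrite lee_fin.
  - exact/measurable_EFinP.
  - by move=> x _; rewrite lee_fin.
  - exact/measurable_EFinP.
  apply: ge0_le_integral => //.
  - by apply/measurable_EFinP; apply: measurableT_comp => //; exact: measurable_funB.
  - by apply: emeasurable_funD; exact/measurable_EFinP.
  - by move=> x _; rewrite -EFinD lee_fin (le_trans (ler_normB _ _)) // !ger0_norm.
rewrite ge0_fin_numE ?(le_lt_trans TV_le2) ?ltry //.
by apply: integral_ge0 => x _; rewrite lee_fin.
Qed.

Let m_rel_entropy : measurable_fun setT (fun x => (p x * ln (p x / q x))%:E).
Proof. exact/measurable_EFinP/measurable_rel_entropy. Qed.

Lemma rel_entropy_funeneg_fin_num :
  \int[mu]_x ((fun x => (p x * ln (p x / q x))%:E)^\- x) \is a fin_num.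
Proof.
rewrite ge0_fin_numE; last by apply: integral_ge0 => x _; exact: funeneg_ge0.
apply: (@le_lt_trans _ _ (\int[mu]_x (q x)%:E)); last by rewrite int_q ltry.
apply: ge0_le_integral => //; first exact: measurable_funeneg.
  exact/measurable_EFinP.
move=> x _; rewrite funenegE ge_max -EFinN !lee_fin q_ge0 andbT lerNl.
exact: oppr_le_rel_entropy.
Qed.

(* Gibbs' inequality. Where [q] vanishes so does [p], almost everywhere, and
   elsewhere [p ln (p / q) >= p - q]. *)
Lemma rel_entropy_ge0 : dens_abs_cont mu p q ->
  0 <= \int[mu]_x (p x * ln (p x / q x))%:E.
Proof.
move=> pq; set N := [set x | q x = 0%R].
have mN : measurable N.
  by rewrite -[N]setTI; exact: (mq measurableT (measurable_set1 0%R)).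
have int_pN : \int[mu]_(x in N) (p x)%:E = 0.
  by apply: pq => //; apply: integral0_eq => x ->.
set pC := fun x => (p x * \1_(~` N) x)%R.
have mpC : measurable_fun setT pC.
  by apply: measurable_funM => //; exact/measurable_indic/measurableC.
have pC_ge0 x : (0 <= pC x)%R by rewrite mulr_ge0 ?indic_ge0.
have int_pC : \int[mu]_x (pC x)%:E = 1.
  rewrite -int_p -[in RHS](setUCr N) ge0_integral_setU //; last 4 first.
  - exact: measurableC.
  - by rewrite setUCr; exact/measurable_EFinP.
  - by move=> x _; rewrite lee_fin.
  - by rewrite /disj_set setICr.
  rewrite int_pN add0e [in RHS]integral_mkcond; apply: eq_integral => x _.
  by rewrite /patch /pC indicE; case: (x \in _); rewrite ?mulr1 ?mulr0.
have integrable_dens (f : T -> R) :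
    measurable_fun setT f -> (forall x, 0 <= f x)%R ->
    \int[mu]_x (f x)%:E = 1 -> mu.-integrable setT (EFin \o f).
  move=> mf f0 f1; apply/integrableP; split; first exact/measurable_EFinP.
  by under eq_integral do rewrite /= ger0_norm //; rewrite f1 ltry.
have int_pC_q : \int[mu]_x ((pC x)%:E - (q x)%:E) = 0.
  by rewrite integralB_EFin ?int_pC ?int_q ?subee //; exact: integrable_dens.
rewrite -int_pC_q.
apply: le_integral_measurable => //.
  by apply/measurable_EFinP; exact: measurable_funB.
move=> x; rewrite lee_fin /pC indicE in_setC.
have [q0|q_neq0] := eqVneq (q x) 0%R.
  have -> : x \in N by rewrite inE.
  by rewrite q0 mulr0 subr0 invr0 mulr0 (ln0 (lexx 0)) mulr0.
have -> : x \notin N by apply/negP; rewrite inE; exact/eqP.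
rewrite mulr1; apply: sub_le_rel_entropy => //; by rewrite lt0r q_neq0 q_ge0.
Qed.

Lemma KL_ge0 : 0 <= KL mu p q.
Proof. by rewrite /KL; case: asboolP => [/rel_entropy_ge0|_]; rewrite ?leey. Qed.

Lemma KL_mixture_le (t : R) : (0 <= t <= 1)%R -> dens_abs_cont mu p q ->
  KL mu (mixture t p q) q <= t%:E * KL mu p q.
Proof.
move=> t01 pq; have [t0 _] := andP t01.
rewrite /KL !asboolT //; last exact: dens_abs_cont_mixture.
rewrite -integralZl_fin_funeneg //; last exact: rel_entropy_funeneg_fin_num.
have [m_mix _ _] := is_density_mixture t01.
apply: le_integral_measurable => //.
- exact/measurable_EFinP/measurable_rel_entropy.
- exact: measurable_funeM.
- by move=> x; rewrite -EFinM lee_fin /mixture rel_entropy_mix_le.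
Qed.

End densities.

Theorem lemma2 (d : measure_display) (T : measurableType d) (R : realType)
    (mu : {measure set T -> \bar R}) (hmu : sigma_finite setT mu)
    (q : T -> R) (hq : is_density mu q) (v : R) (hv : (0 < v)%R) :
  Dstar mu v q =
  ereal_inf [set KL mu p q | p in [set p | is_density mu p /\ TV mu p q = v%:E]].
Proof.
apply/eqP; rewrite eq_le; apply/andP; split.
  apply: le_ereal_inf => _ [p [hp TVv] <-].
  by exists p => //; split => //; rewrite TVv.
apply: le_ereal_inf_tmp => _ [p [hp vTV] <-].
have [pq|npq] := pselect (dens_abs_cont mu p q); last by rewrite /KL asboolF ?leey.
set V := fine (TV mu p q).
have TV_V : TV mu p q = V%:E by rewrite fineK // TV_fin_num.
have v_le_V : (v <= V)%R by rewrite -lee_fin -TV_V.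
have V_gt0 : (0 < V)%R := lt_le_trans hv v_le_V.
set t := (v / V)%R.
have t01 : (0 <= t <= 1)%R.
  by rewrite /t ler_pdivrMr // mul1r v_le_V andbT divr_ge0 // ltW.
apply: (@le_trans _ _ (KL mu (mixture t p q) q)).
  apply: ereal_inf_lbound; exists (mixture t p q) => //.
  split; first exact: is_density_mixture.
  by rewrite TV_mixture ?TV_V -?EFinM /t ?divfK ?gt_eqF //; case/andP: t01.
apply: le_trans (KL_mixture_le hp hq t01 pq) _.
by rewrite gee_pMl ?KL_ge0 //; case/andP: t01.
Qed.
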